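(* Let $\alpha$ be an expanding algebraic number and $\mathcal{D}\subset\mathbb{Z}[\alpha]$ a standard digit set for $\alpha$. For each $x\in\mathbb{Z}[\alpha]$, $\mathcal{G}(x)=\bigcup_{y\in T_\alpha^{-1}(x)}\alpha^{-1}\cdot\mathcal{G}(y)$.
   Context: $\alpha$ is an algebraic number all of whose conjugates have modulus $>1$. $K=\mathbb{Q}(\alpha)$, $\alpha\mathcal{O}_K=\mathfrak{a}/\mathfrak{b}$ with coprime integral ideals; $S_\alpha$ = infinite primes together with primes dividing $\mathfrak{b}$; $\mathbb{K}_\alpha=\prod_{\mathfrak{p}\in S_\alpha}K_\mathfrak{p}$ (completions), $\Phi_\alpha$ the diagonal embedding, $\mathbb{Q}(\alpha)$ acting componentwise by multiplication. $\mathcal{D}$ standard: complete residue system of $\mathbb{Z}[\alpha]/\alpha\mathbb{Z}[\alpha]$. $\mathcal{F}=\{\sum_{k\ge1}\Phi_\alpha(d_k\alpha^{-k}):d_k\in\mathcal{D}\}$; $\mathcal{G}(x)=\{(z_\mathfrak{p})\in\mathcal{F}+\Phi_\alpha(x): z_\mathfrak{p}=0\ \forall\mathfrak{p}\mid\mathfrak{b}\}$. The map $T_\alpha:\mathbb{Z}[\alpha]\to\mathbb{Z}[\alpha]$ is $x\mapsto\alpha^{-1}(x-d)$ where $d$ is the unique element of $\mathcal{D}$ with $\alpha^{-1}(x-d)\in\mathbb{Z}[\alpha]$; $T_\alpha^{-1}(x)$ denotes the preimage set. *)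

From mathcomp Require Import all_boot all_order all_algebra all_fingroup all_field.
Set Implicit Arguments. Unset Strict Implicit. Unset Printing Implicit Defensive.
Import Order.TTheory GRing.Theory Num.Theory.
Local Open Scope ring_scope.

Section Defs.
Variable alpha : algC.

Definition expanding : Prop :=
  forall beta : algC, root (minCpoly alpha) beta -> 1 < `|beta|.

Definition inK (x : algC) : Prop :=
  exists p : {poly rat}, x = (map_poly ratr p).[alpha].
Definition inZalpha (x : algC) : Prop :=
  exists p : {poly int}, x = (map_poly (fun z : int => z%:~R) p).[alpha].
Definition inOK (x : algC) : Prop := inK x /\ x \in Aint.

Definition prime_ideal (P : algC -> Prop) : Prop :=
  (forall x, P x -> inOK x) /\ P 0 /\
  (forall x y, P x -> P y -> P (x + y)) /\
  (forall r x, inOK r -> P x -> P (r * x)) /\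
  ~ P 1 /\
  (forall x y, inOK x -> inOK y -> P (x * y) -> P x \/ P y) /\
  (exists x, P x /\ x <> 0).

Fixpoint ideal_pow (P : algC -> Prop) (n : nat) : algC -> Prop :=
  match n with
  | 0 => inOK
  | n'.+1 => fun x => exists l : seq (algC * algC),
       (forall ab, ab \in l -> P ab.1 /\ ideal_pow P n' ab.2) /\
       x = \sum_(ab <- l) ab.1 * ab.2
  end.

(* x in P^n O_{K,P}  (i.e. v_P(x) >= n), for x in K. *)
Definition vP_ge (P : algC -> Prop) (n : nat) (x : algC) : Prop :=
  exists s, [/\ inOK s, ~ P s & ideal_pow P n (s * x)].

(* P divides the denominator ideal b of alpha O_K = a/b (a, b coprime):
   equivalently v_P(alpha) < 0, i.e. alpha is not in the localisation O_{K,P}. *)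
Definition divides_denom (P : algC -> Prop) : Prop := ~ vP_ge P 0 alpha.

(* Places of K: an infinite place is given by a conjugate beta of alpha
   (the embedding alpha |-> beta), with beta, conj beta identified by
   requiring 0 <= Im beta; a finite place by a prime ideal. *)
Inductive place := Inf of algC | Fin of (algC -> Prop).

Definition in_S (v : place) : Prop :=
  match v with
  | Inf beta => root (minCpoly alpha) beta /\ 0 <= 'Im beta
  | Fin P => prime_ideal P /\ divides_denom P
  end.

(* "x is n-small at v": basic neighbourhoods of 0 in K for the topology of v. *)
Definition small (v : place) (n : nat) (x : algC) : Prop :=
  match v with
  | Inf beta => exists p : {poly rat},
      x = (map_poly ratr p).[alpha] /\ `|(map_poly ratr p).[beta]| < (n.+1%:R)^-1
  | Fin P => vP_ge P n x
  end.

(* The completion K_v is modelled by Cauchy sequences of elements of K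
   modulo null sequences. *)
Definition cauchy (v : place) (s : nat -> algC) : Prop :=
  (forall i, inK (s i)) /\
  forall n, exists N, forall i j, (N <= i)%N -> (N <= j)%N -> small v n (s i - s j).

Definition ceq (v : place) (s t : nat -> algC) : Prop :=
  forall n, exists N, forall i, (N <= i)%N -> small v n (s i - t i).

Definition conv_to (v : place) (u : nat -> algC) (z : nat -> algC) : Prop :=
  forall n, exists N, forall m, (N <= m)%N ->
    exists M, forall i, (M <= i)%N -> small v n (u m - z i).

(* Points of K_alpha = prod_{v in S_alpha} K_v. *)
Definition Kpoint := place -> nat -> algC.
Definition is_point (z : Kpoint) : Prop := forall v, in_S v -> cauchy v (z v).
Definition peq (z w : Kpoint) : Prop := forall v, in_S v -> ceq v (z v) (w v).
Definition pscale (c : algC) (z : Kpoint) : Kpoint := fun v k => c * z v k.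

Variable D : algC -> Prop.

Definition standard_digits : Prop :=
  (forall d, D d -> inZalpha d) /\
  (forall x, inZalpha x -> exists! d, D d /\
      exists y, inZalpha y /\ x - d = alpha * y).

(* T_alpha(y) = x  (as a relation; it is functional when D is standard). *)
Definition T_alpha (y x : algC) : Prop :=
  inZalpha y /\ exists d, [/\ D d, inZalpha (alpha^-1 * (y - d)) & x = alpha^-1 * (y - d)].

(* z in F + Phi(x):  z - Phi(x) = sum_{k>=1} Phi(d_k alpha^-k) in K_alpha. *)
Definition in_F_plus (x : algC) (z : Kpoint) : Prop :=
  exists d : nat -> algC, (forall k, D (d k)) /\
    forall v, in_S v ->
      conv_to v (fun m => x + \sum_(1 <= k < m.+1) d k * alpha ^- k) (z v).

Definition in_G (x : algC) (z : Kpoint) : Prop :=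
  in_F_plus x z /\ forall P, in_S (Fin P) -> ceq (Fin P) (z (Fin P)) (fun _ => 0).

End Defs.

(* Multiplication by [alpha] and by [alpha^-1] are mutually inverse and continuous at
   every place of [S_alpha], so they act termwise on convergent digit expansions:
   [alpha (x + sum_(k>=1) d_k alpha^-k) = (alpha x + d_1) + sum_(k>=1) d_(k+1) alpha^-k],
   where [y = alpha x + d_1] is exactly a preimage of [x] under [T_alpha].
   Continuity at an infinite place is immediate. At a finite place [P] it amounts to
   [P^k O_(K,P) <= z O_(K,P)] for some [k], for each nonzero integer [z]. For a prime [p]
   this is Nakayama's lemma: the chain [P^k + pO_K] is stationary because [O_K / pO_K] is
   finite-dimensional over [F_p], and the determinant trick turns
   [P^(k+1) + pO_K = P^k + pO_K] into some [t = 1 mod P] with [t P^k <= pO_K]. *)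

From mathcomp Require Import all_boot all_order all_algebra all_fingroup all_field.
From Stdlib Require Import Classical IndefiniteDescription.
From mathcomp Require Import ring.
Import Order.TTheory GRing.Theory Num.Theory.
Local Open Scope ring_scope.
Set Implicit Arguments. Unset Strict Implicit. Unset Printing Implicit Defensive.

Local Notation pQtoC := (map_poly (ratr : rat -> algC)).

Lemma fun_choice (I T : Type) (Q : I -> T -> Prop) :
  (forall i, exists t, Q i t) -> exists f : I -> T, forall i, Q i (f i).
Proof.
move=> h; exists (fun i => proj1_sig (constructive_indefinite_description _ (h i))).
by move=> i; exact: (proj2_sig (constructive_indefinite_description _ (h i))).
Qed.

Section Closure.
Variable alpha : algC.
Local Notation inK := (inK alpha).
Local Notation inOK := (inOK alpha).

Lemma inK_rat (c : rat) : inK (ratr c).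
Proof. by exists c%:P; rewrite map_polyC hornerC. Qed.
Lemma inK_int (z : int) : inK z%:~R.
Proof. by have := inK_rat z%:~R; rewrite rmorph_int. Qed.
Lemma inK_alpha : inK alpha.
Proof. by exists 'X; rewrite map_polyX hornerX. Qed.
Lemma inKD x y : inK x -> inK y -> inK (x + y).
Proof. by move=> [p ->] [q ->]; exists (p + q); rewrite rmorphD hornerD. Qed.
Lemma inKN x : inK x -> inK (- x).
Proof. by move=> [p ->]; exists (- p); rewrite rmorphN hornerN. Qed.
Lemma inKM x y : inK x -> inK y -> inK (x * y).
Proof. by move=> [p ->] [q ->]; exists (p * q); rewrite rmorphM hornerM. Qed.

Lemma inOK_int (z : int) : inOK z%:~R.
Proof. by split; [apply: inK_int | apply: Aint_int]. Qed.
Lemma inOK0 : inOK 0. Proof. exact: inOK_int 0. Qed.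
Lemma inOK1 : inOK 1. Proof. exact: inOK_int 1. Qed.
Lemma inOKD x y : inOK x -> inOK y -> inOK (x + y).
Proof. by move=> [? ?] [? ?]; split; [apply: inKD | apply: rpredD]. Qed.
Lemma inOKN x : inOK x -> inOK (- x).
Proof. by move=> [? ?]; split; [apply: inKN | rewrite rpredN]. Qed.
Lemma inOKB x y : inOK x -> inOK y -> inOK (x - y).
Proof. by move=> hx hy; apply/inOKD/inOKN. Qed.
Lemma inOKM x y : inOK x -> inOK y -> inOK (x * y).
Proof. by move=> [? ?] [? ?]; split; [apply: inKM | apply: rpredM]. Qed.
Lemma inOK_sign n : inOK ((-1) ^+ n).
Proof. by rewrite -signr_odd; case: (odd n); [rewrite expr1; apply/inOKN/inOK1 | apply: inOK1]. Qed.
Lemma inOK_sum I (r : seq I) (F : I -> algC) :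
  (forall i, inOK (F i)) -> inOK (\sum_(i <- r) F i).
Proof. by move=> h; apply: big_ind => //; [apply: inOK0 | apply: inOKD]. Qed.
Lemma inOK_prod I (r : seq I) (Q : pred I) (F : I -> algC) :
  (forall i, inOK (F i)) -> inOK (\prod_(i <- r | Q i) F i).
Proof. by move=> h; apply: big_ind => //; [apply: inOK1 | apply: inOKM]. Qed.

End Closure.

Lemma inZD alpha x y : inZalpha alpha x -> inZalpha alpha y -> inZalpha alpha (x + y).
Proof. by move=> [p ->] [q ->]; exists (p + q); rewrite rmorphD hornerD. Qed.
Lemma inZM alpha x y : inZalpha alpha x -> inZalpha alpha y -> inZalpha alpha (x * y).
Proof. by move=> [p ->] [q ->]; exists (p * q); rewrite rmorphM hornerM. Qed.
Lemma inZ_alpha alpha : inZalpha alpha alpha.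
Proof. by exists 'X; rewrite map_polyX hornerX. Qed.

Lemma inK_inv alpha : alpha != 0 -> inK alpha alpha^-1.
Proof.
move=> a0; have [m [Dm mon_m] dv] := minCpolyP alpha.
pose h := drop_poly 1 m.
have Dm0 : m = h * 'X + (m`_0)%:P.
  apply/polyP => -[|i]; rewrite coefD coefMX coefC /= ?add0r //.
  by rewrite coef_drop_poly addn1 addr0.
have size_m : (1 < size m)%N.
  by rewrite -(size_map_poly (ratr : {rmorphism rat -> algC})) -Dm size_minCpoly.
have h_alpha : (pQtoC h).[alpha] * alpha + ratr m`_0 = 0.
  have <- : (pQtoC m).[alpha] = 0 by apply/rootP; rewrite dv dvdpp.
  by rewrite {2}Dm0 rmorphD rmorphM /= map_polyX map_polyC hornerMXaddC.
have m00 : ratr m`_0 != 0 :> algC.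
  apply/eqP => m00; move: h_alpha; rewrite m00 addr0 => /eqP.
  rewrite mulf_eq0 (negbTE a0) orbF => /eqP/rootP; rewrite dv => /dvdp_leq.
  rewrite -size_poly_eq0 size_drop_poly subn_eq0 leqNgt size_m => /(_ isT).
  by rewrite leqNgt ltn_subrL (ltnW size_m).
have -> : alpha^-1 = - (pQtoC h).[alpha] / ratr m`_0.
  apply: (mulfI a0); rewrite mulfV // mulrA.
  have -> : alpha * - (pQtoC h).[alpha] = ratr m`_0.
    by apply/eqP; rewrite mulrN mulrC eqr_oppLR -subr_eq0 opprK h_alpha.
  by rewrite mulfV.
by rewrite -fmorphV; apply: inKM; [apply: inKN; exists h | apply: inK_rat].
Qed.

(* [ideal_pow P n.+1] is [sum_prod P (ideal_pow P n)] by definition. *)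
Definition sum_prod (A B : algC -> Prop) (y : algC) : Prop :=
  exists l : seq (algC * algC),
    (forall ab, ab \in l -> A ab.1 /\ B ab.2) /\ y = \sum_(ab <- l) ab.1 * ab.2.

Lemma sum_prod_ind (A B C : algC -> Prop) y :
  C 0 -> (forall x y, C x -> C y -> C (x + y)) ->
  (forall a b, A a -> B b -> C (a * b)) -> sum_prod A B y -> C y.
Proof.
move=> C0 CD CM [l [hl ->]]; rewrite big_seq.
by apply: big_ind => // ab /hl [? ?]; apply: CM.
Qed.

Lemma sum_prod0 A B : sum_prod A B 0.
Proof. by exists [::]; rewrite big_nil. Qed.
Lemma sum_prodD A B x y : sum_prod A B x -> sum_prod A B y -> sum_prod A B (x + y).
Proof.
move=> [l1 [h1 ->]] [l2 [h2 ->]]; exists (l1 ++ l2); split; last by rewrite big_cat.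
by move=> ab; rewrite mem_cat => /orP [/h1|/h2].
Qed.
Lemma sum_prodM (A B : algC -> Prop) a b : A a -> B b -> sum_prod A B (a * b).
Proof.
move=> ha hb; exists [:: (a, b)]; split; last by rewrite big_seq1.
by move=> ab; rewrite inE => /eqP ->.
Qed.
Lemma sum_prod_mono (A B A' B' : algC -> Prop) y :
  (forall x, A x -> A' x) -> (forall x, B x -> B' x) -> sum_prod A B y -> sum_prod A' B' y.
Proof.
move=> hA hB; apply: sum_prod_ind; [exact: sum_prod0 | exact: sum_prodD |].
by move=> a b /hA ? /hB ?; apply: sum_prodM.
Qed.

Section PrimeIdeal.
Variable alpha : algC.
Local Notation inOK := (inOK alpha).
Variable P : algC -> Prop.
Hypothesis hP : prime_ideal alpha P.
Local Notation I := (ideal_pow alpha P).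

Lemma P_OK x : P x -> inOK x. Proof. by case: hP => h _; apply: h. Qed.
Lemma P_0 : P 0. Proof. by case: hP => _ [h _]. Qed.
Lemma P_D x y : P x -> P y -> P (x + y). Proof. by case: hP => _ [_ [h _]]; apply: h. Qed.
Lemma P_M r x : inOK r -> P x -> P (r * x). Proof. by case: hP => _ [_ [_ [h _]]]; apply: h. Qed.
Lemma P_not1 : ~ P 1. Proof. by case: hP => _ [_ [_ [_ [h _]]]]. Qed.
Lemma P_prime x y : inOK x -> inOK y -> P (x * y) -> P x \/ P y.
Proof. by case: hP => _ [_ [_ [_ [_ [h _]]]]]; apply: h. Qed.
Lemma P_Mr r x : inOK r -> P x -> P (x * r). Proof. by rewrite mulrC; apply: P_M. Qed.
Lemma P_N x : P x -> P (- x).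
Proof. by rewrite -mulN1r; apply: P_M => //; apply/inOKN/inOK1. Qed.
Lemma P_B x y : P x -> P y -> P (x - y).
Proof. by move=> hx hy; apply/P_D/P_N. Qed.
Lemma P_notM x y : inOK x -> inOK y -> ~ P x -> ~ P y -> ~ P (x * y).
Proof. by move=> hx hy nx ny /(P_prime hx hy) []. Qed.

Lemma ideal_pow_OK n x : I n x -> inOK x.
Proof.
elim: n x => [//|n IH] x; apply: sum_prod_ind; [exact: inOK0 | exact: inOKD |].
by move=> a b /P_OK ha /IH hb; apply: inOKM.
Qed.
Lemma ideal_pow0 n : I n 0.
Proof. by case: n => [|n]; [apply: inOK0 | exact: sum_prod0]. Qed.
Lemma ideal_powD n x y : I n x -> I n y -> I n (x + y).
Proof. by case: n => [|n]; [apply: inOKD | exact: sum_prodD]. Qed.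
Lemma ideal_powM n r x : inOK r -> I n x -> I n (r * x).
Proof.
case: n => [|n] hr; first exact: inOKM.
apply: (@sum_prod_ind P (I n) (fun y => I n.+1 (r * y))).
- by rewrite mulr0; exact: sum_prod0.
- by move=> ? ? ? ?; rewrite mulrDr; exact: sum_prodD.
by move=> a b ha hb; rewrite mulrA; apply: sum_prodM => //; apply: P_M.
Qed.
Lemma ideal_powN n x : I n x -> I n (- x).
Proof. by rewrite -mulN1r; apply: ideal_powM => //; apply/inOKN/inOK1. Qed.
Lemma ideal_powS n x : I n.+1 x -> I n x.
Proof.
elim: n x => [|n IH] x.
  apply: (@sum_prod_ind P (I 0) inOK); [exact: inOK0 | exact: inOKD |].
  by move=> a b /P_OK ha hb; apply: inOKM.
by apply: (@sum_prod_mono P (I n.+1)) => // y; apply: IH.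
Qed.
Lemma ideal_pow_le m n x : (m <= n)%N -> I n x -> I m x.
Proof.
move=> /subnK <-; elim: (n - m)%N x => [|k IH] x; first by rewrite add0n.
by rewrite addSn => /ideal_powS /IH.
Qed.

Lemma ideal_pow_addn a b y : I (a + b) y -> sum_prod (I a) (I b) y.
Proof.
elim: a y => [|a IH] y.
  by rewrite add0n => h; rewrite -[y]mul1r; apply: sum_prodM => //; apply: inOK1.
rewrite addSn; apply: sum_prod_ind; [exact: sum_prod0 | exact: sum_prodD |].
move=> c q hc /IH; apply: (@sum_prod_ind _ _ (fun q => sum_prod (I a.+1) (I b) (c * q))).
- by rewrite mulr0; apply: sum_prod0.
- by move=> ? ? ? ?; rewrite mulrDr; apply: sum_prodD.
- by move=> y' z hy hz; rewrite mulrA; apply: sum_prodM => //; apply: sum_prodM.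
Qed.

Local Notation vP := (vP_ge alpha P).

Lemma vP_ge0 n : vP n 0.
Proof. by exists 1; split; [apply: inOK1 | apply: P_not1 | rewrite mulr0; apply: ideal_pow0]. Qed.
Lemma vP_geD n x y : vP n x -> vP n y -> vP n (x + y).
Proof.
move=> [s [hs ns hx]] [t [ht nt hy]]; exists (s * t); split.
- exact: inOKM.
- exact: P_notM.
have -> : s * t * (x + y) = t * (s * x) + s * (t * y) by ring.
by apply: ideal_powD; apply: ideal_powM.
Qed.
Lemma vP_geN n x : vP n x -> vP n (- x).
Proof. by move=> [s [hs ns hx]]; exists s; split => //; rewrite mulrN; apply: ideal_powN. Qed.

End PrimeIdeal.

Section FiniteDimension.
Variable alpha : algC.
Local Notation inK := (inK alpha).

Lemma inK_poly_size_bound : exists d, forall x, inK x ->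
  exists q : {poly rat}, (size q < d)%N /\ x = (pQtoC q).[alpha].
Proof.
have [m [Dm mon_m] dv] := minCpolyP alpha.
exists (size m) => x [q ->]; exists (q %% m); split; first by rewrite ltn_modp monic_neq0.
have m_alpha : (pQtoC m).[alpha] = 0 by apply/rootP; rewrite dv dvdpp.
by rewrite {1}(divp_eq q m) rmorphD rmorphM hornerD hornerM m_alpha mulr0 add0r.
Qed.

Lemma inK_rat_dep : exists d, forall L : seq algC, (forall i, inK L`_i) ->
  (d < size L)%N -> exists2 v : 'I_(size L) -> rat,
  \sum_(i < size L) ratr (v i) * L`_i = 0 & exists i, v i != 0.
Proof.
have [d hd] := inK_poly_size_bound; exists d => L hL hsz.
have [Q HQ] := fun_choice (fun i : nat => hd _ (hL i)).
pose A : 'M[rat]_(size L, d) := \matrix_(i, j) (Q i)`_j.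
have kA : kermx A != 0.
  rewrite -mxrank_eq0 mxrank_ker subn_eq0 -ltnNge.
  exact: leq_ltn_trans (rank_leq_col A) hsz.
pose v := nz_row (kermx A).
have vA : v *m A = 0 by apply/sub_kermxP; apply: nz_row_sub.
exists (v 0); last first.
  apply: NNPP => hn; move: kA; rewrite -nz_row_eq0 -/v; apply/negP/negPn/eqP.
  apply/rowP => b; rewrite mxE; apply/eqP; apply: NNPP => h; apply: hn; exists b; exact/negP.
have -> : \sum_(i < size L) ratr (v 0 i) * L`_i =
          (pQtoC (\sum_(i < size L) v 0 i *: Q i)).[alpha].
  rewrite rmorph_sum horner_sum; apply: eq_bigr => i _.
  by rewrite /= map_polyZ hornerZ; case: (HQ i) => _ <-.
suff -> : \sum_(i < size L) v 0 i *: Q i = 0 by rewrite rmorph0 horner0.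
apply/polyP => j; rewrite coef_sum coef0.
have [hj|hj] := ltnP j d.
  have := congr1 (fun M : 'M_(1, d) => M 0 (Ordinal hj)) vA.
  rewrite /= !mxE => h; apply: etrans h; apply: eq_bigr => i _; by rewrite coefZ mxE.
apply: big1 => i _; rewrite coefZ nth_default ?mulr0 //.
by case: (HQ i) => hs _; apply: leq_trans (ltnW hs) hj.
Qed.

Lemma inK_int_dep : exists d, forall L : seq algC, (forall i, inK L`_i) ->
  (d < size L)%N -> exists2 c : 'I_(size L) -> int,
  \sum_(i < size L) (c i)%:~R * L`_i = 0 & exists i, c i != 0.
Proof.
have [d hd] := inK_rat_dep; exists d => L hL hsz.
have [v hv [i0 hi0]] := hd L hL hsz.
pose N : int := \prod_(i < size L) denq (v i).
have N0 : N != 0 by apply/prodf_neq0 => i _; apply: denq_neq0.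
have [c hc] : exists c : 'I_(size L) -> int, forall i, v i * N%:~R = (c i)%:~R.
  apply: (@fun_choice _ _ (fun i z => v i * N%:~R = z%:~R)) => i; apply/intrP.
  by rewrite /N (bigD1 i) //= rmorphM mulrA -numqE rpredM ?intr_int.
exists c; last first.
  exists i0; apply: contra_neq hi0 => ci0; apply/eqP.
  by move: (hc i0); rewrite ci0 mulr0z => /eqP; rewrite mulf_eq0 intr_eq0 (negbTE N0) orbF.
have -> : \sum_(i < size L) (c i)%:~R * L`_i =
          N%:~R * \sum_(i < size L) ratr (v i) * L`_i.
  rewrite mulr_sumr; apply: eq_bigr => i _.
  by rewrite -(rmorph_int (ratr : {rmorphism rat -> algC})) -hc rmorphM rmorph_int mulrA (mulrC N%:~R).
by rewrite hv mulr0.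
Qed.

End FiniteDimension.

Lemma rat_mul_denq_int (s : seq rat) i :
  s`_i * (\prod_(j < size s) denq s`_j)%:~R \is a Num.int.
Proof.
have [hi|hi] := ltnP i (size s); last by rewrite nth_default ?mul0r.
by rewrite (bigD1 (Ordinal hi)) //= rmorphM mulrA -numqE rpredM ?intr_int.
Qed.

(* With [N] the common denominator of the minimal polynomial [m] of [x] (of degree [n]),
   [N x] is a root of the monic integer polynomial [N^n m(X / N)]. *)
Lemma Aint_int_multiple (x : algC) : exists2 N : int, N != 0 & N%:~R * x \in Aint.
Proof.
have [m [Dm mon_m] _] := minCpolyP x.
have m_x : (pQtoC m).[x] = 0 by rewrite -Dm; apply/rootP/root_minCpoly.
have size_m : size m = (size m).-1.+1.
  by rewrite prednK // -(size_map_poly (ratr : {rmorphism rat -> algC})) -Dm ltnW ?size_minCpoly.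
set n := (size m).-1 in size_m; set N : int := \prod_(i < size m) denq m`_i.
exists N; first by apply/prodf_neq0 => i _; apply: denq_neq0.
pose E i : algC := ratr (m`_i * N%:~R ^+ (n - i)).
have E_n : E n = 1.
  by move/monicP: mon_m; rewrite lead_coefE -/n /E subnn expr0 mulr1 => ->; rewrite rmorph1.
have size_E : size (\poly_(i < n.+1) E i) = n.+1.
  by rewrite size_poly_eq // E_n oner_neq0.
apply: (@root_monic_Aint (\poly_(i < n.+1) E i)).
- apply/rootP; rewrite horner_poly.
  transitivity (N%:~R ^+ n * (pQtoC m).[x]); last by rewrite m_x mulr0.
  rewrite horner_coef size_map_poly -size_m mulr_sumr; apply: eq_bigr => i _.
  have -> : N%:~R ^+ n = N%:~R ^+ (n - i) * N%:~R ^+ i :> algC.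
    by rewrite -exprD subnK // -ltnS -size_m.
  by rewrite /E coef_map rmorphM rmorphXn rmorph_int exprMn; ring.
- by rewrite monicE lead_coefE size_E coef_poly ltnSn E_n.
apply/polyOverP => i; rewrite coef_poly; case: ltnP => hi; last exact: rpred0.
rewrite /E Cint_rat; have [i_lt_n|i_ge_n] := ltnP i n.
  by rewrite -(subnSK i_lt_n) exprS mulrA rpredM ?rat_mul_denq_int // rpredX ?intr_int.
have -> : i = n by apply/eqP; rewrite eqn_leq i_ge_n -ltnS hi.
by move: E_n; rewrite /E => /eqP; rewrite fmorph_eq1 => /eqP ->; apply: rpred1.
Qed.

Lemma inK_int_multiple alpha c :
  inK alpha c -> exists2 z : int, z != 0 & inOK alpha (z%:~R * c).
Proof.
move=> [q ->]; have [N N0 NA] := Aint_int_multiple alpha.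
pose D : int := \prod_(i < size q) denq q`_i.
exists (D * N ^+ size q).
  by rewrite mulf_neq0 ?expf_neq0 //; apply/prodf_neq0 => i _; apply: denq_neq0.
split; first by apply: inKM; [apply: inK_int | exists q].
rewrite horner_coef size_map_poly mulr_sumr rpred_sum // => i _.
have -> : (D * N ^+ size q)%:~R * ((pQtoC q)`_i * alpha ^+ i) =
    ratr (q`_i * D%:~R) * N%:~R ^+ (size q - i) * (N%:~R * alpha) ^+ i.
  rewrite coef_map intrM rmorphXn.
  have -> : N%:~R ^+ size q = N%:~R ^+ (size q - i) * N%:~R ^+ i :> algC.
    by rewrite -exprD subnK // ltnW.
  by rewrite rmorphM rmorph_int exprMn; ring.
apply: rpredM; last exact: rpredX.
apply: rpredM; last by apply/rpredX/Aint_int.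
by apply: Aint_Cint; rewrite Cint_rat rat_mul_denq_int.
Qed.

Section PrincipalIdeal.
Variable alpha : algC.
Local Notation inOK := (inOK alpha).
Variable c : algC.

Definition in_ideal (y : algC) := exists2 g, inOK g & y = c * g.

Lemma in_ideal_mul g : inOK g -> in_ideal (c * g). Proof. by exists g. Qed.
Lemma in_ideal0 : in_ideal 0. Proof. by exists 0; rewrite ?mulr0 //; apply: inOK0. Qed.
Lemma in_idealD x y : in_ideal x -> in_ideal y -> in_ideal (x + y).
Proof. by move=> [g hg ->] [h hh ->]; rewrite -mulrDr; apply/in_ideal_mul/inOKD. Qed.
Lemma in_idealM r y : inOK r -> in_ideal y -> in_ideal (r * y).
Proof. by move=> hr [g hg ->]; rewrite mulrCA; apply/in_ideal_mul/inOKM. Qed.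
Lemma in_idealN y : in_ideal y -> in_ideal (- y).
Proof. by rewrite -mulN1r; apply: in_idealM; apply/inOKN/inOK1. Qed.
Lemma in_idealB x y : in_ideal x -> in_ideal y -> in_ideal (x - y).
Proof. by move=> hx hy; apply/in_idealD/in_idealN. Qed.
Lemma in_ideal_sum I (r : seq I) (F : I -> algC) :
  (forall i, in_ideal (F i)) -> in_ideal (\sum_(i <- r) F i).
Proof. by move=> h; apply: big_ind => //; [apply: in_ideal0 | apply: in_idealD]. Qed.

End PrincipalIdeal.

Definition lcomb (L : seq algC) (c : 'I_(size L) -> int) :=
  \sum_(i < size L) (c i)%:~R * L`_i.

Section ModPrime.
Variable alpha : algC.
Local Notation inOK := (inOK alpha).
Variable p : nat.
Hypothesis p_pr : prime p.
Local Notation in_pOK := (in_ideal alpha p%:R).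

Definition span_modp (L : seq algC) (y : algC) :=
  exists c : 'I_(size L) -> int, in_pOK (y - lcomb c).
Definition indep_modp (L : seq algC) :=
  forall c : 'I_(size L) -> int, in_pOK (lcomb c) -> forall i, (p%:Z %| c i)%Z.

Lemma indep_modp_nil : indep_modp [::].
Proof. by move=> c _ []. Qed.

Lemma indep_modp_cons L x :
  indep_modp L -> inOK x -> ~ span_modp L x -> indep_modp (x :: L).
Proof.
move=> hL hx hsp c hc.
pose c' (j : 'I_(size L)) := c (lift ord0 j).
have c_split : lcomb c = (c ord0)%:~R * x + lcomb c' by rewrite /lcomb big_ord_recl.
have hp0 : (p%:Z %| c ord0)%Z.
  apply/negPn/negP => hnd; apply: hsp.
  have [u [v huv]] := Bezoutz (c ord0) p%:Z.
  have g1 : gcdz (c ord0) p%:Z = 1.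
    rewrite /gcdz gcdnC; apply/eqP; change (coprime p `|c ord0|).
    by rewrite prime_coprime.
  rewrite g1 in huv.
  (* [u c_0 = 1 mod p], so [x = u lcomb c - u lcomb c'] modulo [p]. *)
  exists (fun j => - u * c' j).
  have -> : x - lcomb (fun j => - u * c' j) = u%:~R * lcomb c + p%:R * (v%:~R * x).
    have x_eq : x = (u%:~R * (c ord0)%:~R + v%:~R * p%:R) * x.
      by rewrite -[p%:R]/((p%:Z)%:~R) -!intrM -intrD huv mul1r.
    have -> : lcomb (fun j => - u * c' j) = - u%:~R * lcomb c'.
      by rewrite /lcomb mulr_sumr; apply: eq_bigr => i _; rewrite intrM intrN mulrA.
    by rewrite c_split {1}x_eq; ring.
  apply: in_idealD; first by apply: in_idealM => //; apply: inOK_int.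
  by apply: in_ideal_mul; apply: inOKM => //; apply: inOK_int.
have hc' : in_pOK (lcomb c').
  have -> : lcomb c' = lcomb c - (c ord0)%:~R * x by rewrite c_split; ring.
  apply: in_idealB => //; move: hp0 => /dvdzP [w ->].
  rewrite intrM -[(p%:Z)%:~R]/(p%:R : algC) (mulrC w%:~R) -mulrA.
  by apply: in_ideal_mul; apply: inOKM => //; apply: inOK_int.
by move=> i; case: (unliftP ord0 i) => [j ->|->] //; apply: hL hc' j.
Qed.

Lemma indep_modp_free L (c : 'I_(size L) -> int) :
  indep_modp L -> lcomb c = 0 -> forall i, c i = 0.
Proof.
move=> hL; suff dvd k : lcomb c = 0 -> forall i, ((p%:Z) ^+ k %| c i)%Z.
  move=> hc i; apply/eqP; apply: contraT => ci0.
  have /dvdn_leq := dvd `|c i|%N hc i; rewrite abszX absz_gt0 => /(_ ci0).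
  by rewrite leqNgt ltn_expl ?prime_gt1.
elim: k c => [|k IH] c0 hc j; first by rewrite expr0 dvd1z.
have hp : forall i, (p%:Z %| c0 i)%Z by apply: hL; rewrite hc; apply: in_ideal0.
pose c' i := (c0 i %/ p%:Z)%Z.
have cc' i : c0 i = c' i * p%:Z by rewrite divzK.
have hc' : lcomb c' = 0.
  have : p%:R * lcomb c' = lcomb c0.
    rewrite /lcomb mulr_sumr; apply: eq_bigr => i _.
    by rewrite cc' intrM -[(p%:Z)%:~R]/(p%:R : algC); ring.
  by rewrite hc => /eqP; rewrite mulf_eq0 pnatr_eq0 eqn0Ngt prime_gt0 // => /eqP.
by rewrite cc' exprSr; apply: dvdz_mul; [apply: IH | apply: dvdzz].
Qed.

Lemma indep_modp_size_bound : exists d, forall L, (forall x, x \in L -> inOK x) ->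
  indep_modp L -> (size L <= d)%N.
Proof.
have [d hd] := inK_int_dep alpha; exists d => L hL hI.
rewrite leqNgt; apply/negP => hs.
have [|c hc [i ci]] := hd L _ hs.
  move=> i; have [hi|hi] := ltnP i (size L); first by case: (hL _ (mem_nth 0 hi)).
  by rewrite nth_default //; apply: inK_int 0.
by move: ci; rewrite (indep_modp_free hI hc).
Qed.

Lemma span_modp_finite (J : algC -> Prop) : (forall y, J y -> inOK y) ->
  exists2 L, (forall x, x \in L -> J x) & forall y, J y -> span_modp L y.
Proof.
move=> hJ; apply: NNPP => hn.
have [d hd] := indep_modp_size_bound.
suff [L [hs hL hI]] : exists L, [/\ size L = d.+1, forall x, x \in L -> J x & indep_modp L].
  by have := hd L (fun x hx => hJ x (hL x hx)) hI; rewrite hs ltnn.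
elim: d.+1 => [|r [L [hs hL hI]]]; first by exists [::]; split => //; apply: indep_modp_nil.
have [y [hy hsp]] : exists y, J y /\ ~ span_modp L y.
  apply: NNPP => h; apply: hn; exists L => // y hy.
  by apply: NNPP => h'; apply: h; exists y.
exists (y :: L); split; first by rewrite /= hs.
  by move=> x; rewrite inE => /orP [/eqP ->|/hL].
by apply: indep_modp_cons => //; apply: hJ.
Qed.

End ModPrime.

Section LocalPowers.
Variable alpha : algC.
Local Notation inOK := (inOK alpha).
Variable P : algC -> Prop.
Hypothesis hP : prime_ideal alpha P.
Local Notation I := (ideal_pow alpha P).

Lemma det_OK n (M : 'M[algC]_n) : (forall i j, inOK (M i j)) -> inOK (\det M).
Proof.
by move=> h; apply: inOK_sum => s; apply: inOKM; [apply: inOK_sign | apply: inOK_prod].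
Qed.

(* Only the identity permutation avoids the off-diagonal entries, which lie in [P]. *)
Lemma det_sub1_P n (M : 'M[algC]_n) : (forall i j, inOK (M i j)) ->
  (forall i j, i != j -> P (M i j)) -> (forall i, P (M i i - 1)) -> P (\det M - 1).
Proof.
move=> hO hoff hdiag; rewrite /determinant (bigD1 (1%g : 'S_n)) //= odd_perm1 expr0 mul1r.
rewrite addrAC; apply: (P_D hP).
  have [] : inOK (\prod_i M i ((1%g : 'S_n) i)) /\ P (\prod_i M i ((1%g : 'S_n) i) - 1).
    apply: (big_ind (fun y => inOK y /\ P (y - 1))).
    - by split; [apply: inOK1 | rewrite subrr; apply: (P_0 hP)].
    - move=> x y [hx hpx] [hy hpy]; split; first exact: inOKM.
      have -> : x * y - 1 = x * (y - 1) + (x - 1) by ring.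
      by apply: (P_D hP) => //; apply: (P_M hP).
    - by move=> i _; rewrite perm1; split => //; apply: hdiag.
  by [].
apply: big_ind => //; [exact: P_0 hP | exact: P_D hP | move=> s hs].
have [i hi] : exists i, s i != i.
  apply: NNPP => hn; move/negP: hs; apply; apply/eqP/permP => i.
  rewrite perm1; apply/eqP; apply: NNPP => h; apply: hn; exists i; exact/negP.
rewrite (bigD1 i) //= mulrCA mulrC; apply: (P_M hP).
  by apply: inOKM; [apply: inOK_sign | apply: inOK_prod].
by apply: hoff; rewrite eq_sym.
Qed.

(* The determinant trick: [t = det (1 - A)] kills [E] modulo [c], and [t = 1 mod P]. *)
Lemma det_trick c n (A : 'I_n -> 'I_n -> algC) (E : 'I_n -> algC) :
  (forall i j, P (A i j)) -> (forall i, in_ideal alpha c (E i - \sum_j A i j * E j)) ->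
  exists t, [/\ inOK t, ~ P t & forall i, in_ideal alpha c (t * E i)].
Proof.
move=> hA hE.
pose M : 'M[algC]_n := \matrix_(i, j) ((i == j)%:R - A i j).
have MOK i j : inOK (M i j).
  rewrite mxE; apply: inOKB; last exact: (P_OK hP (hA i j)).
  by case: (i == j); [apply: inOK1 | apply: inOK0].
have t1 : P (\det M - 1).
  apply: det_sub1_P => // [i j hij|i]; rewrite mxE.
    by rewrite (negbTE hij) sub0r; apply/(P_N hP)/hA.
  by rewrite eqxx addrAC subrr add0r; apply/(P_N hP)/hA.
exists (\det M); split; first exact: det_OK.
  move=> h; apply: (P_not1 hP); have -> : 1 = \det M - (\det M - 1) by ring.
  by apply: (P_B hP).
move=> i; pose V : 'cV[algC]_n := \col_j E j.
have MV j : (M *m V) j 0 = E j - \sum_l A j l * E l.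
  rewrite mxE (eq_bigr (fun l => (j == l)%:R * E l - A j l * E l)) => [|l _]; last first.
    by rewrite !mxE mulrBl.
  rewrite sumrB (bigD1 j) //= eqxx mul1r big1 ?addr0 // => l hl.
  by rewrite eq_sym (negbTE hl) mul0r.
have <- : (\adj M *m (M *m V)) i 0 = \det M * E i.
  by rewrite mulmxA mul_adj_mx mul_scalar_mx !mxE.
rewrite mxE; apply: in_ideal_sum => j; apply: in_idealM; last by rewrite MV.
rewrite mxE /cofactor; apply: inOKM; first exact: inOK_sign.
by apply: det_OK => a b; have := MOK (lift j a) (lift i b); rewrite !mxE.
Qed.

(* [P^k] lies in [c O_K] after localisation at [P]. *)
Definition pow_local_sub (k : nat) (c : algC) :=
  exists t, [/\ inOK t, ~ P t & forall y, I k y -> in_ideal alpha c (t * y)].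

Section PrimeModulus.
Variable p : nat.
Hypothesis p_pr : prime p.
Local Notation in_pOK := (in_ideal alpha p%:R).
Local Notation span_modp := (span_modp alpha p).

Definition in_pow_pOK k y := exists a g, [/\ I k a, inOK g & y = a + p%:R * g].

Lemma in_pow_pOK_OK k y : in_pow_pOK k y -> inOK y.
Proof.
move=> [a [g [ha hg ->]]]; apply: inOKD; first exact: ideal_pow_OK ha.
by apply: inOKM => //; apply: inOK_int p.
Qed.
Lemma in_pow_pOK_pow k a : I k a -> in_pow_pOK k a.
Proof. by move=> h; exists a, 0; split => //; [apply: inOK0 | rewrite mulr0 addr0]. Qed.
Lemma in_pow_pOK_pOK k y : in_pOK y -> in_pow_pOK k y.
Proof. by move=> [g hg ->]; exists 0, g; split => //; [apply: ideal_pow0 | rewrite add0r]. Qed.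
Lemma in_pow_pOKD k x y : in_pow_pOK k x -> in_pow_pOK k y -> in_pow_pOK k (x + y).
Proof.
move=> [a [g [ha hg ->]]] [b [h [hb hh ->]]]; exists (a + b), (g + h); split.
- exact: ideal_powD.
- exact: inOKD.
- by ring.
Qed.
Lemma in_pow_pOKM k r y : inOK r -> in_pow_pOK k y -> in_pow_pOK k (r * y).
Proof.
move=> hr [a [g [ha hg ->]]]; exists (r * a), (r * g); split.
- exact: ideal_powM.
- exact: inOKM.
- by ring.
Qed.
Lemma in_pow_pOK_le k j y : (k <= j)%N -> in_pow_pOK j y -> in_pow_pOK k y.
Proof. by move=> hkj [a [g [ha hg ->]]]; exists a, g; split => //; apply: ideal_pow_le ha. Qed.
Lemma in_pow_pOK_span k L y :
  (forall x, x \in L -> in_pow_pOK k x) -> span_modp L y -> in_pow_pOK k y.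
Proof.
move=> hL [c hc]; have -> : y = (y - lcomb c) + lcomb c by ring.
apply: in_pow_pOKD; first exact: in_pow_pOK_pOK.
rewrite /lcomb; apply: big_ind => [|u v|i _]; first by apply/in_pow_pOK_pow/ideal_pow0.
  exact: in_pow_pOKD.
by apply: in_pow_pOKM; [apply: inOK_int | apply/hL/mem_nth].
Qed.

(* Otherwise elements [y_k] of [P^k + pO_K] outside [P^(k+1) + pO_K] would give
   arbitrarily long families independent modulo [p]. *)
Lemma in_pow_pOK_stationary : exists k, forall y, in_pow_pOK k y -> in_pow_pOK k.+1 y.
Proof.
apply: NNPP => hn.
have step k : exists y, in_pow_pOK k y /\ ~ in_pow_pOK k.+1 y.
  apply: NNPP => h; apply: hn; exists k => y hy.
  by apply: NNPP => h'; apply: h; exists y.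
have [d hd] := indep_modp_size_bound alpha p_pr.
suff /(_ 0%N) [L [hs hL hI]] : forall k, exists L,
    [/\ size L = d.+1, forall x, x \in L -> in_pow_pOK k x & indep_modp alpha p L].
  by have := hd L (fun x hx => in_pow_pOK_OK (hL x hx)) hI; rewrite hs ltnn.
elim: d.+1 => [|r IH] k; first by exists [::]; split => //; apply: indep_modp_nil.
have [L [hs hL hI]] := IH k.+1; have [y [hy hny]] := step k.
exists (y :: L); split; first by rewrite /= hs.
  move=> x; rewrite inE => /orP [/eqP -> //|/hL].
  by apply: in_pow_pOK_le; apply: leqnSn.
apply: indep_modp_cons => //; first exact: in_pow_pOK_OK hy.
by move=> hsp; apply: hny; apply: in_pow_pOK_span hsp.
Qed.

Lemma pow_succ_coeffs k L : (forall y, I k y -> span_modp L y) ->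
  forall a, I k.+1 a -> exists2 A : 'I_(size L) -> algC,
    forall j, P (A j) & in_pOK (a - \sum_j A j * L`_j).
Proof.
move=> hsp a; elim/sum_prod_ind => [|x y [A hA hx] [B hB hy]|a' b ha hb].
- exists (fun _ => 0) => [j|]; first exact: P_0 hP.
  by rewrite big1 ?subrr => [|j _]; [apply: in_ideal0 | rewrite mul0r].
- exists (fun j => A j + B j) => [j|]; first by apply: (P_D hP).
  have -> : x + y - \sum_j (A j + B j) * L`_j =
            (x - \sum_j A j * L`_j) + (y - \sum_j B j * L`_j).
    rewrite (eq_bigr (fun j => A j * L`_j + B j * L`_j)) => [|j _]; last by rewrite mulrDl.
    by rewrite big_split /=; ring.
  exact: in_idealD.
- have [c hc] := hsp b hb.
  exists (fun j => a' * (c j)%:~R) => [j|]; first by apply: (P_Mr hP) => //; apply: inOK_int.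
  have -> : a' * b - \sum_j a' * (c j)%:~R * L`_j = a' * (b - lcomb c).
    by rewrite /lcomb mulrBr mulr_sumr; congr (_ - _); apply: eq_bigr => j _; rewrite mulrA.
  by apply: in_idealM => //; apply: (P_OK hP).
Qed.

Lemma pow_local_sub_prime : exists k, pow_local_sub k p%:R.
Proof.
have [k hk] := in_pow_pOK_stationary.
have [L hL hsp] := span_modp_finite p_pr (@in_pow_pOK_OK k).
have hsp_pow y : I k y -> span_modp L y by move=> hy; apply/hsp/in_pow_pOK_pow.
have [A hA] : exists A : 'I_(size L) -> 'I_(size L) -> algC, forall i,
    (forall j, P (A i j)) /\ in_pOK (L`_i - \sum_j A i j * L`_j).
  apply: (@fun_choice 'I_(size L) _ (fun i (B : 'I_(size L) -> algC) =>
    (forall j, P (B j)) /\ in_pOK (L`_i - \sum_j B j * L`_j))) => i.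
  have [a [g [ha hg ->]]] := hk _ (hL _ (mem_nth 0 (ltn_ord i))).
  have [B hB hpa] := pow_succ_coeffs hsp_pow ha.
  exists B; split => //.
  have -> : a + p%:R * g - \sum_j B j * L`_j = (a - \sum_j B j * L`_j) + p%:R * g by ring.
  by apply: in_idealD => //; apply: in_ideal_mul.
have [t [ht nt htL]] := det_trick (fun i => proj1 (hA i)) (fun i => proj2 (hA i)).
exists k, t; split => // y hy.
have [c hc] := hsp_pow y hy.
have -> : t * y = t * (y - lcomb c) + \sum_i (c i)%:~R * (t * L`_i).
  have -> : \sum_i (c i)%:~R * (t * L`_i) = t * lcomb c.
    by rewrite /lcomb mulr_sumr; apply: eq_bigr => i _; ring.
  by ring.
apply: in_idealD; first exact: in_idealM.
by apply: in_ideal_sum => i; apply: in_idealM; [apply: inOK_int | apply: htL].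
Qed.

End PrimeModulus.

Lemma pow_local_subM k1 k2 a b : pow_local_sub k1 a -> pow_local_sub k2 b ->
  pow_local_sub (k1 + k2) (a * b).
Proof.
move=> [t1 [h1 n1 H1]] [t2 [h2 n2 H2]].
exists (t1 * t2); split; [exact: inOKM | exact: (P_notM hP) |].
move=> y /ideal_pow_addn; elim/sum_prod_ind => [|x z hx hz|u v hu hv].
- by rewrite mulr0; apply: in_ideal0.
- by rewrite mulrDr; apply: in_idealD.
have [g1 hg1 e1] := H1 u hu; have [g2 hg2 e2] := H2 v hv.
have -> : t1 * t2 * (u * v) = a * b * (g1 * g2) by rewrite mulrACA e1 e2; ring.
by apply/in_ideal_mul/inOKM.
Qed.

Lemma pow_local_subN k c : pow_local_sub k c -> pow_local_sub k (- c).
Proof.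
move=> [t [ht nt H]]; exists t; split => // y /H [g hg ->].
by rewrite -mulrNN; apply/in_ideal_mul/inOKN.
Qed.

Lemma pow_local_sub_nat n : (0 < n)%N -> exists k, pow_local_sub k n%:R.
Proof.
elim/ltn_ind: n => n IH n0.
have [n_gt1|n_le1] := ltnP 1 n; last first.
  have -> : n = 1%N by apply/eqP; rewrite eqn_leq n_le1.
  exists 0%N, 1; split => [||y hy]; [exact: inOK1 | exact: (P_not1 hP) |].
  by exists y; rewrite ?mul1r.
have p_pr := pdiv_prime n_gt1.
have [k1 h1] := pow_local_sub_prime p_pr.
have [|k2 h2] := IH (n %/ pdiv n)%N (ltn_Pdiv (prime_gt1 p_pr) n0).
  by rewrite divn_gt0 ?prime_gt0 // dvdn_leq // pdiv_dvd.
exists (k1 + k2)%N; rewrite -(divnK (pdiv_dvd n)) natrM mulrC.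
exact: pow_local_subM.
Qed.

Lemma pow_local_sub_int z : z != 0 -> exists k, pow_local_sub k z%:~R.
Proof.
move=> z0; have [|k h] := @pow_local_sub_nat `|z|; first by rewrite absz_gt0.
exists k; rewrite {1}(intEsign z) rmorphM rmorph_sign /=.
by case: (z < 0)%R; rewrite ?expr1 ?mulN1r ?mul1r //; apply: pow_local_subN.
Qed.

(* [P^k] lies locally in [z O_K], and [z c] is integral: so [c P^(k+n)] lies locally in [P^n]. *)
Lemma vP_ge_mull c : inK alpha c -> forall n, exists n', forall x,
  vP_ge alpha P n' x -> vP_ge alpha P n (c * x).
Proof.
move=> /inK_int_multiple [z z0 hzc] n.
have [k [t [ht nt H]]] := pow_local_sub_int z0.
exists (k + n)%N => x [s [hs ns /ideal_pow_addn hx]].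
exists (t * s); split; [exact: inOKM | exact: (P_notM hP) |].
have -> : t * s * (c * x) = t * c * (s * x) by ring.
move: (s * x) hx => y; elim/sum_prod_ind => [|u v hu hv|u v hu hv].
- by rewrite mulr0; apply: ideal_pow0.
- by rewrite mulrDr; apply: ideal_powD.
have [g hg e] := H u hu.
have -> : t * c * (u * v) = z%:~R * c * g * v.
  by transitivity (c * (t * u) * v); [ring | rewrite e; ring].
by apply: ideal_powM => //; apply: inOKM.
Qed.

End LocalPowers.


Section Place.
Variables (alpha : algC) (v : place).
Hypothesis hv : in_S alpha v.
Local Notation small := (small alpha v).
Local Notation ceq := (ceq alpha v).
Local Notation conv_to := (conv_to alpha v).

Lemma small0 n : small n 0.
Proof.
case: v hv => [b|Q] /= hv'; last by apply: vP_ge0; case: hv'.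
by exists 0; rewrite !rmorph0 !horner0 normr0 invr_gt0 ltr0n.
Qed.

Lemma smallN n x : small n x -> small n (- x).
Proof.
case: v hv => [b|Q] /= hv'; last by apply: vP_geN; case: hv'.
by move=> [q [-> hq]]; exists (- q); rewrite !rmorphN !hornerN normrN.
Qed.

(* At an infinite place, [1/(2n+2) + 1/(2n+2) = 1/(n+1)]. *)
Lemma smallD n : exists n', forall x y, small n' x -> small n' y -> small n (x + y).
Proof.
case: v hv => [b|Q] /= hv'; last by exists n => x y; apply: vP_geD; case: hv'.
exists n.*2.+1 => x y [q [-> hq]] [r [-> hr]].
exists (q + r); rewrite rmorphD !hornerD; split => //.
apply: le_lt_trans (ler_normD _ _) _; apply: lt_le_trans (ltrD hq hr) _.
have -> : n.*2.+2%:R = n.+1%:R * 2 :> algC by rewrite -natrM muln2 doubleS.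
by rewrite invfM -splitr.
Qed.

(* At an infinite place, [|r(b)| < B] lets [1/(B(n+1))] absorb the factor. *)
Lemma small_mull c : inK alpha c ->
  forall n, exists n', forall x, small n' x -> small n (c * x).
Proof.
case: v hv => [b|Q] /= hv' [r ->] n; last by apply: vP_ge_mull; [case: hv' | exists r].
pose B := Num.Def.archi_bound `|(pQtoC r).[b]|.
have hB : `|(pQtoC r).[b]| < B%:R by apply/archi_boundP/normr_ge0.
have B0 : (0 < B)%N by rewrite -(ltr_nat algC); apply: le_lt_trans (normr_ge0 _) hB.
exists (B * n.+1).-1 => x [q [-> hq]].
exists (r * q); split; first by rewrite rmorphM hornerM.
rewrite prednK ?muln_gt0 ?B0 // in hq.
rewrite rmorphM hornerM normrM.
apply: le_lt_trans (ler_wpM2r (normr_ge0 _) (ltW hB)) _.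
have -> : (n.+1%:R^-1 : algC) = B%:R * (B * n.+1)%N%:R^-1.
  by rewrite natrM invfM mulrA mulfV ?mul1r // pnatr_eq0 -lt0n.
by rewrite ltr_pM2l // ltr0n.
Qed.

Lemma ceq_eq s t : (forall i, s i = t i) -> ceq s t.
Proof. by move=> e n; exists 0%N => i _; rewrite e subrr; apply: small0. Qed.

Lemma ceq_trans s t u : ceq s t -> ceq t u -> ceq s u.
Proof.
move=> hst htu n; have [n' hD] := smallD n.
have [N1 h1] := hst n'; have [N2 h2] := htu n'.
exists (maxn N1 N2) => i; rewrite geq_max => /andP [i1 i2].
have -> : s i - u i = (s i - t i) + (t i - u i) by ring.
by apply: hD; [apply: h1 | apply: h2].
Qed.

Lemma ceq_mull c s t : inK alpha c -> ceq s t -> ceq (fun i => c * s i) (fun i => c * t i).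
Proof.
move=> hc hst n; have [n' hn'] := small_mull hc n; have [N hN] := hst n'.
by exists N => i hi; rewrite -mulrBr; apply/hn'/hN.
Qed.

Lemma cauchy_mull c s : inK alpha c -> cauchy alpha v s -> cauchy alpha v (fun i => c * s i).
Proof.
move=> hc [hK hC]; split => [i|n]; first exact: inKM.
have [n' hn'] := small_mull hc n; have [N hN] := hC n'.
by exists N => i j hi hj; rewrite -mulrBr; apply/hn'/hN.
Qed.

Lemma conv_to_mull c u z : inK alpha c ->
  conv_to u z -> conv_to (fun m => c * u m) (fun i => c * z i).
Proof.
move=> hc huz n; have [n' hn'] := small_mull hc n; have [N hN] := huz n'.
exists N => m hm; have [M hM] := hN m hm.
by exists M => i hi; rewrite -mulrBr; apply/hn'/hM.
Qed.

Lemma conv_to_ceq u z w : conv_to u w -> ceq z w -> conv_to u z.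
Proof.
move=> huw hzw n; have [n' hD] := smallD n.
have [N hN] := huw n'; have [M1 hM1] := hzw n'.
exists N => m hm; have [M2 hM2] := hN m hm.
exists (maxn M1 M2) => i; rewrite geq_max => /andP [i1 i2].
have -> : u m - z i = (u m - w i) + - (z i - w i) by ring.
by apply: hD; [apply: hM2 | apply/smallN/hM1].
Qed.

Lemma conv_to_ext u u' z : (forall m, u m = u' m) -> conv_to u z -> conv_to u' z.
Proof. by move=> e h n; have [N hN] := h n; exists N => m; rewrite -e; apply: hN. Qed.

Lemma conv_to_shiftE u z : conv_to (fun m => u m.+1) z <-> conv_to u z.
Proof.
split=> h n; have [N hN] := h n.
  by exists N.+1 => -[//|m] hm; apply: hN.
by exists N => m hm; apply/hN/leqW.
Qed.

End Place.

Lemma expanding_neq0 alpha : expanding alpha -> alpha != 0.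
Proof.
by move=> hexp; apply/eqP => a0; have := hexp _ (root_minCpoly alpha); rewrite a0 normr0 ltr10.
Qed.

Section DigitExpansion.
Variables (alpha : algC) (D : algC -> Prop).
Hypothesis a0 : alpha != 0.

Definition digit_sum (x : algC) (d : nat -> algC) (m : nat) :=
  x + \sum_(1 <= k < m.+1) d k * alpha ^- k.

Lemma digit_sum_shift x d m :
  alpha * digit_sum x d m.+1 = digit_sum (alpha * x + d 1%N) (fun k => d k.+1) m.
Proof.
rewrite /digit_sum big_nat_recl // mulrDr mulrDr !addrA expr1 mulrCA mulfV // mulr1.
congr (_ + _); rewrite mulr_sumr; apply: eq_bigr => k _.
by rewrite exprS invfM mulrCA (mulrA alpha) mulfV // mul1r.
Qed.

Lemma in_G_preimage x z : (forall d, D d -> inZalpha alpha d) ->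
  inZalpha alpha x -> is_point alpha z -> in_G alpha D x z ->
  exists y, T_alpha alpha D y x /\ exists w : Kpoint,
    [/\ is_point alpha w, in_G alpha D y w & peq alpha z (pscale alpha^-1 w)].
Proof.
move=> hD hx hz [[d [hd hconv]] hfin].
exists (alpha * x + d 1%N); split.
  split; first by apply: inZD; [apply: inZM hx; apply: inZ_alpha | apply/hD/hd].
  by exists (d 1%N); rewrite addrK mulKf.
exists (pscale alpha z); split.
- by move=> v hv; apply: cauchy_mull (hz v hv); last exact: inK_alpha.
- split.
    exists (fun k => d k.+1); split => [k|v hv]; first exact: hd.
    apply: (conv_to_ext (digit_sum_shift x d)).
    apply: (@conv_to_shiftE alpha v (fun m => alpha * digit_sum x d m) _).2.
    exact: (conv_to_mull hv (inK_alpha alpha) (hconv v hv)).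
  move=> P hP; apply: (ceq_trans hP (ceq_mull hP (inK_alpha alpha) (hfin P hP))).
  by apply: ceq_eq => // i; rewrite mulr0.
- by move=> v hv; apply: ceq_eq => // i; rewrite /pscale mulKf.
Qed.

Lemma preimage_in_G x y z w : T_alpha alpha D y x -> in_G alpha D y w ->
  peq alpha z (pscale alpha^-1 w) -> in_G alpha D x z.
Proof.
move=> [_ [d0 [hd0 _ ex]]] [[d [hd hconv]] hfin] hzw.
pose e k := if k == 1%N then d0 else d k.-1.
have e_shift m : digit_sum (alpha * x + e 1%N) (fun k => e k.+1) m = digit_sum y d m.
  rewrite /digit_sum /e eqxx ex mulVKf // subrK; congr (_ + _).
  by apply: eq_big_nat => -[|k].
split.
  exists e; split => [k|v hv]; first by rewrite /e; case: ifP.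
  apply: (@conv_to_shiftE alpha v (digit_sum x e) _).1.
  apply: (conv_to_ceq hv _ (hzw v hv)).
  apply: (conv_to_ext _ (conv_to_mull hv (inK_inv a0) (hconv v hv))) => m.
  by rewrite -[_ + _]/(digit_sum y d m) -e_shift -digit_sum_shift mulKf.
move=> P hP; apply: (ceq_trans hP (hzw _ hP)).
apply: (ceq_trans hP (ceq_mull hP (inK_inv a0) (hfin P hP))).
by apply: ceq_eq => // i; rewrite mulr0.
Qed.

End DigitExpansion.

Theorem proposition6p5 (alpha : algC) (D : algC -> Prop) :
  expanding alpha -> standard_digits alpha D ->
  forall x, inZalpha alpha x ->
  forall z : Kpoint, is_point alpha z ->
    (in_G alpha D x z <->
     exists y, T_alpha alpha D y x /\
       exists w : Kpoint, [/\ is_point alpha w, in_G alpha D y w &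
                              peq alpha z (pscale alpha^-1 w)]).
Proof.
move=> /expanding_neq0 a0 [hD _] x hx z hz; split; first exact: in_G_preimage.
by move=> [y [hT [w [_ hG hzw]]]]; apply: preimage_in_G hT hG hzw.
Qed.
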